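(* Let $g,n,d$ be nonnegative integers with $2g-2+n>0$, and let $b_2,\dots,b_n$ be nonnegative integers. Expand the coefficient $\big[\mathcal{D}^d_{g,n}(a_2,\dots,a_n)\big]_{a_2^{b_2}\cdots a_n^{b_n}}\in\mathcal{S}^d_{g,n}$ in the standard basis of the strata algebra, and let $[\Gamma,\gamma]$ be a basis element appearing with nonzero coefficient. Then for every $i\in\{2,\dots,n\}$, the exponent $y(\ell_i)$ of the $\psi$-class on the leg $\ell_i$ of $\Gamma$ labeled $i$ in $\gamma$ satisfies $y(\ell_i)\le b_i/2$.
   Context: Stable graphs and strata algebra: a stable graph $\Gamma$ of genus $g$ with $n$ legs has vertices $V$ with genera $g(v)$, half-edges $H$ with vertex map $p$ and involution $\iota$ (2-cycles are edges $E$, fixed points are legs labeled by $\{1,\dots,n\}$), is connected, satisfies $2g(v)-2+n(v)>0$ and $g=\#E-\#V+1+\sum_v g(v)$. The strata algebra $\mathcal{S}_{g,n}$ is the $\mathbb{Q}$-vector space with basis the isomorphism classes of pairs $[\Gamma,\gamma]$ where $\gamma$ is a product over vertices of monomials in $\kappa$-classes and $\psi$-classes of the half-edges at $v$ (of degree $\le 3g(v)-3+n(v)$ on $\overline{\mathcal{M}}_{g(v),n(v)}$); for a half-edge $h$ we write $y(h)$ for the exponent of $\psi_h$ in $\gamma$. It is graded by $\#E+\deg\gamma$; $\mathcal{S}^d_{g,n}$ is the degree-$d$ part. Pixton's class: fix integers $a_1,\dots,a_n$ with $\sum a_j=0$ and an integer $r>0$. A weighting mod $r$ on $\Gamma$ is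 $w:H\to\{0,\dots,r-1\}$ with $w(\ell_i)\equiv a_i$ on legs, $w(h)+w(h')\equiv0$ on each edge $(h,h')$, and $\sum_{h\in p^{-1}(v)}w(h)\equiv0$ at each vertex (all mod $r$). Set $\widetilde{\mathcal{D}}^r_{g,n}=\sum_\Gamma\frac{1}{\#\mathrm{Aut}(\Gamma)}\frac{1}{r^{\#E-\#V+1}}\sum_w[\Gamma,\gamma_w]$ with $\gamma_w=\prod_{i=1}^n e^{\frac12 a_i^2\psi_i}\prod_{(h,h')\in E}\frac{1-e^{-\frac12 w(h)w(h')(\psi_h+\psi_{h'})}}{\psi_h+\psi_{h'}}$ (no $\kappa$-classes). For $r\gg0$ this is polynomial in $r$; its constant term is Pixton's class. Substituting $a_1=-(a_2+\cdots+a_n)$, it is known (Pixton) to depend polynomially on $a_2,\dots,a_n$; it is denoted $\mathcal{D}_{g,n}(a_2,\dots,a_n)$, and $\mathcal{D}^d_{g,n}$ is its degree-$d$ component. $[\,\cdot\,]_{m}$ denotes the coefficient of the monomial $m$. *)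

From mathcomp Require Import all_boot all_order all_algebra.
From mathcomp Require Import fingroup perm.
From mathcomp Require Import mpoly.
Set Implicit Arguments. Unset Strict Implicit. Unset Printing Implicit Defensive.
Import Order.TTheory GRing.Theory Num.Theory.
Local Open Scope ring_scope.

(* Concrete stable graphs of genus g with n legs.                      *)
(* Vertices : 'I_V, half-edges : 'I_H.                                  *)
(* Data: genus of vertices (bounded by g, which holds for every stable *)
(* graph of genus g), vertex map p, involution iota, leg labelling:    *)
(* leg i (i : 'I_n) is the half-edge carrying label i+1.               *)
Definition CG (g n V H : nat) : finType :=
  ({ffun 'I_V -> 'I_g.+1} * {ffun 'I_H -> 'I_V} * {ffun 'I_H -> 'I_H}
     * {ffun 'I_n -> 'I_H})%type.

Section Graphs.
Variables (g n V H : nat).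
Implicit Type G : CG g n V H.

Definition gv G (v : 'I_V) : nat := G.1.1.1 v.
Definition pv G (h : 'I_H) : 'I_V := G.1.1.2 h.
Definition io G (h : 'I_H) : 'I_H := G.1.2 h.
Definition leg G (i : 'I_n) : 'I_H := G.2 i.

Definition nv G (v : 'I_V) : nat := #|[set h | pv G h == v]|.
Definition nedges G : nat := #|[set h | io G h != h]| %/ 2.
Definition adj G : rel 'I_V :=
  fun v w => [exists h, (pv G h == v) && (pv G (io G h) == w)].

Definition is_stable_graph G : bool :=
  [&& [forall h, io G (io G h) == h],
      injectiveb (leg G),
      [forall h, (io G h == h) == (h \in codom (leg G))],
      (0 < V)%N,
      [forall v, [forall w, connect (adj G) v w]],
      [forall v, (2 < 2 * gv G v + nv G v)%N] &
      (g + V == nedges G + 1 + \sum_(v < V) gv G v)%N ].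

Definition h1 G : int := (nedges G)%:Z + 1 - V%:Z.

Definition is_weighting (r : nat) (a : 'I_n -> int) G (w : {ffun 'I_H -> 'I_r})
  : bool :=
  [&& [forall i, ((w (leg G i))%:Z == a i %[mod r%:Z])%Z],
      [forall h, (io G h != h) ==> ((w h + w (io G h)) %% r == 0)%N] &
      [forall v, ((\sum_(h | pv G h == v) (w h : nat)) %% r == 0)%N] ].

(* Coefficient of the monomial  prod_h psi_h^(y h)  in the power series
   gamma_w = prod_i exp(a_i^2 psi_{l_i}/2)
           * prod_{edges (h,h')} (1 - exp(-w(h)w(h')(psi_h+psi_h')/2))/(psi_h+psi_h').
   Expanded:  exp(c x) = sum_k c^k x^k / k!,
   (1 - exp(-c x))/x = sum_k (-1)^k c^(k+1) x^k / (k+1)!,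
   and (psi_h + psi_h')^k has coefficient binomial(k,p) at psi_h^p psi_h'^(k-p). *)
Definition leg_coef (a : int) (k : nat) : rat :=
  ((a%:~R) ^+ 2 / 2) ^+ k / (k`!)%:R.
Definition edge_coef (c : rat) (p q : nat) : rat :=
  (-1) ^+ (p + q) * c ^+ (p + q).+1 / ((p + q).+1`!)%:R * ('C(p + q, p))%:R.

Definition gamma_coef (r : nat) (a : 'I_n -> int) G (w : {ffun 'I_H -> 'I_r})
  (y : 'I_H -> nat) : rat :=
  (\prod_(i < n) leg_coef (a i) (y (leg G i))) *
  \prod_(h | (io G h != h) && (h < io G h)%N)
     edge_coef ((w h)%:R * (w (io G h))%:R / 2) (y h) (y (io G h)).

End Graphs.

Definition permpair (V H : nat) : finType := prod {perm 'I_V} {perm 'I_H}.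

Definition is_iso_map g n V H V' H' (G' : CG g n V' H') (G : CG g n V H)
  (fV : 'I_V -> 'I_V') (fH : 'I_H -> 'I_H') : bool :=
  [&& [forall v, gv G' (fV v) == gv G v],
      [forall h, pv G' (fH h) == fV (pv G h)],
      [forall h, io G' (fH h) == fH (io G h)] &
      [forall i, leg G' i == fH (leg G i)] ].

Section Graphs2.
Variables (g n V H : nat).
Implicit Type G : CG g n V H.

Definition n_aut G : nat :=
  #|[set s : permpair V H | is_iso_map G G s.1 s.2]|.

Definition iso_same G G' : bool :=
  [exists s : permpair V H, is_iso_map G' G s.1 s.2].

(* number of concrete stable graphs on 'I_V, 'I_H isomorphic to G;
   dividing by it makes a sum over all concrete graphs a sum over
   isomorphism classes (each class counted once). *)
Definition n_class G : nat :=
  #|[set G' : CG g n V H | is_stable_graph G' && iso_same G G']|.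

End Graphs2.

(* Decorated graphs (G,y) (y = psi-exponents on half-edges) and (G0,y0)
   represent the same basis element [Gamma,gamma] of the strata algebra iff
   they are isomorphic (bijections = injections between sets of equal size). *)
Definition deco_iso g n V H V0 H0 (G : CG g n V H) (y : 'I_H -> nat)
  (G0 : CG g n V0 H0) (y0 : 'I_H0 -> nat) : bool :=
  [&& V == V0, H == H0 &
   [exists fV : {ffun 'I_V -> 'I_V0}, exists fH : {ffun 'I_H -> 'I_H0},
      [&& injectiveb fV, injectiveb fH, is_iso_map G0 G fV fH &
          [forall h, y0 (fH h) == y h]]]].

(* A psi-monomial decoration is a basis element of S_{g,n}:
   its degree at each vertex is at most 3g(v)-3+n(v). *)
Definition valid_deco g n V H (G : CG g n V H) (y : 'I_H -> nat) : bool :=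
  [forall v, (\sum_(h | pv G h == v) y h + 3 <= 3 * gv G v + nv G v)%N].

(* Bound on #V and #H for stable graphs of genus g with n legs
   (#V <= 2g-2+n, #H = 2#E + n <= 6g-6+3n). *)
Definition gbound (g n : nat) : nat := (6 * g + 3 * n).+1.

(* Coefficient of the basis element [G0,y0] in D~^r_{g,n} (for legs weights a):
   sum over isomorphism classes of stable graphs Gamma of
   1/|Aut Gamma| * r^(-h^1(Gamma)) * sum_w [Gamma, gamma_w]. *)
Definition Dtilde_coef g n V0 H0 (G0 : CG g n V0 H0) (y0 : 'I_H0 -> nat)
  (r : nat) (a : 'I_n -> int) : rat :=
  \sum_(V < gbound g n) \sum_(H < gbound g n)
   \sum_(G : CG g n V H | is_stable_graph G)
     ((n_class G)%:R * (n_aut G)%:R)^-1 * (r%:R) ^ (- h1 G) *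
     \sum_(w : {ffun 'I_H -> 'I_r} | is_weighting a G w)
       \sum_(y : {ffun 'I_H -> 'I_(\sum_h y0 h).+1}
               | deco_iso G (fun h => (y h : nat)) G0 y0)
         gamma_coef a G w (fun h => (y h : nat)).

Definition rconst (F : nat -> rat) (c : rat) : Prop :=
  exists (P : {poly rat}) (R : nat),
    (forall r, (R <= r)%N -> F r = P.[r%:R]) /\ c = P`_0.

(* a_1 = -(a_2 + ... + a_n): full leg-weight vector from (a_2,...,a_n). *)
Definition extend_a n (a' : 'I_n.-1 -> int) (i : 'I_n) : int :=
  if (i : nat) is k.+1 then
    (if insub k is Some j then a' j else 0)
  else - \sum_(j < n.-1) a' j.

Lemma shift1_proof n (j : 'I_n.-1) : (j.+1 < n)%N.
Proof. by case: n j => [|n] [j Hj]. Qed.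

(* index in 'I_n of the leg labelled j+2, for j : 'I_n.-1 (variable a_{j+2}) *)
Definition shift1 n (j : 'I_n.-1) : 'I_n := Ordinal (shift1_proof j).

From mathcomp Require Import all_boot all_order all_algebra.
From mathcomp Require Import mpoly.
From mathcomp Require Import zify ring.
Set Implicit Arguments. Unset Strict Implicit. Unset Printing Implicit Defensive.
Import Order.TTheory GRing.Theory Num.Theory.
Local Open Scope ring_scope.

(* Fix a leg i and let k := y(l_i).  In every term of D~^r(a) the leg factor
   exp(a_i^2 psi_i / 2) contributes a_i^(2k) / (2^k k!), with the same k for all
   terms since the decoration is fixed.  Clearing the remaining denominators
   (class and automorphism counts, edge factorials and powers of 2, and r^(-h^1)
   against a fixed power r^N) shows that F r^N D~^r(a) is an integer multiple of
   a_i^(2k) for all integer a and r > 0.  As D~^r(a) = O(r^M) uniformly in a, the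
   polynomial it agrees with for r >> 0 has degree at most M, so Vandermonde
   interpolation at M + N + 1 consecutive integers gives a fixed K != 0 with
   K Q(a) an integer multiple of a_i^(2k) for every integer a.  A Kronecker
   substitution a_j = t^(c_j) reduces this to a univariate polynomial p with
   t^D | p(t) for all t > 0; such a p has no coefficient below degree D, and
   these include the coefficients of all monomials of Q with b_i < 2k. *)

Definition int_multiple (A : int) (x : rat) : Prop :=
  exists z : int, x = A%:~R * z%:~R.

Lemma int_multiple_sum A (I : Type) (r : seq I) (P : pred I) (F : I -> rat) :
  (forall i, P i -> int_multiple A (F i)) -> int_multiple A (\sum_(i <- r | P i) F i).
Proof.
move=> HF; apply: big_ind => //; first by exists 0; rewrite mulr0.
by move=> _ _ [z1 ->] [z2 ->]; exists (z1 + z2); rewrite rmorphD mulrDr.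
Qed.

Lemma int_multipleMl A x y :
  x \is a Num.int -> int_multiple A y -> int_multiple A (x * y).
Proof.
by move=> /intrP[u ->] [z ->]; exists (u * z); rewrite rmorphM mulrCA.
Qed.

Lemma int_eq0_of_dvd_pos (c : int) :
  (forall t : nat, (0 < t)%N -> (t%:Z %| c)%Z) -> c = 0.
Proof.
move=> /(_ `|c|.+1 isT); rewrite dvdzE absz_nat => dvd_c.
apply/eqP; rewrite -absz_eq0 -leqn0 leqNgt; apply/negP => c0.
by move: (dvdn_leq c0 dvd_c); rewrite ltnn.
Qed.

Lemma coef_eq0_of_dvd_horner (p : {poly int}) (D : nat) :
  (forall t : nat, (0 < t)%N -> (t%:Z ^+ D %| p.[t%:Z])%Z) ->
  forall i, (i < D)%N -> p`_i = 0.
Proof.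
elim: D p => // D IH p Hp i iD.
have p_split (x : int) : p.[x] = p`_0 + (drop_poly 1 p).[x] * x.
  rewrite -{1}[p](poly_take_drop 1) hornerD hornerM hornerXn expr1.
  congr (_ + _); rewrite (_ : take_poly 1 p = (p`_0)%:P) ?hornerC //.
  by apply/polyP => k; rewrite coef_take_poly coefC; case: k.
have p0 : p`_0 = 0.
  apply: int_eq0_of_dvd_pos => t t0.
  have := Hp t t0; rewrite p_split exprS.
  move=> /(dvdz_trans (dvdz_mulr _ (dvdzz _))).
  by rewrite (rpredDr _ (dvdz_mull _ (dvdzz _))).
case: i iD => // i iD; rewrite -addn1 -coef_drop_poly.
apply: IH iD => t t0; have := Hp t t0.
by rewrite p_split p0 add0r exprSr dvdz_mul2r // eqz_nat -lt0n.
Qed.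

Lemma sum_digits_lt (B k : nat) (f : 'I_k -> nat) :
  (forall i, f i < B)%N -> (\sum_(i < k) f i * B ^ i < B ^ k)%N.
Proof.
elim: k f => [|k IH] f Hf; first by rewrite big_ord0.
rewrite big_ord_recr expnS /= (@leq_trans ((f ord_max).+1 * B ^ k)) //.
  by rewrite mulSn ltn_add2r; apply: IH => i; apply: Hf.
by rewrite leq_mul2r Hf orbT.
Qed.

Lemma sum_digits_inj (B k : nat) (f g : 'I_k -> nat) :
  (forall i, f i < B)%N -> (forall i, g i < B)%N ->
  (\sum_(i < k) f i * B ^ i = \sum_(i < k) g i * B ^ i)%N -> f =1 g.
Proof.
elim: k f g => [|k IH] f g Hf Hg; first by move=> _ [].
have Bk0 : (0 < B ^ k)%N by rewrite expn_gt0; have := Hf ord_max; lia.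
rewrite !big_ord_recr /=.
have ltf := sum_digits_lt (fun i => Hf (widen_ord (leqnSn k) i)).
have ltg := sum_digits_lt (fun i => Hg (widen_ord (leqnSn k) i)).
move=> E; have top : f ord_max = g ord_max.
  have := congr1 (divn^~ (B ^ k)%N) E.
  by rewrite !(addnC (\sum_(i < k) _)) !divnMDl // !divn_small // !addn0.
have low : (fun i => f (widen_ord (leqnSn k) i)) =1
           (fun i => g (widen_ord (leqnSn k) i)).
  by apply: IH => [i|i|]; [exact: Hf | exact: Hg | move: E; rewrite top => /addIn].
move=> i; case: (unliftP ord_max i) => [i' ->|->] //.
have -> : lift ord_max i' = widen_ord (leqnSn k) i'.
  by apply: val_inj; rewrite /= /bump leqNgt ltn_ord.
exact: low.
Qed.

Section KroneckerSubstitution.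
Variables (k : nat) (Q : {mpoly rat[k]}) (j : 'I_k).

(* Substituting a_i := t ^ c i sends the monomial m to t ^ e m.  The extra
   B ^ k in c j makes e m < L * c j as soon as m j < L, while e m mod B ^ k
   is the base-B expansion of m, so e is injective on the support of Q. *)

Let B := (\sum_(m <- msupp Q) \sum_(i < k) m i).+1.
Let c (i : 'I_k) := (B ^ i + (i == j) * B ^ k)%N.
Let e (m : 'X_{1..k}) := (\sum_(i < k) m i * c i)%N.
Let kq : {poly rat} := \sum_(m <- msupp Q) Q@_m *: 'X^(e m).

Let msupp_exponent_lt m i : m \in msupp Q -> (m i < B)%N.
Proof.
move=> mQ; rewrite ltnS (big_rem _ mQ) /=; apply: leq_trans (leq_addr _ _).
by rewrite (bigD1 i) //= leq_addr.
Qed.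

Let kron_exponentE m : e m = (\sum_(i < k) m i * B ^ i + m j * B ^ k)%N.
Proof.
rewrite /e /c; under eq_bigr do rewrite mulnDr.
rewrite big_split /=; congr (_ + _).
by rewrite (bigD1 j) //= eqxx mul1n big1 ?addn0 // => i /negbTE ->; rewrite muln0.
Qed.

Let kron_exponent_inj : {in msupp Q &, injective e}.
Proof.
move=> m1 m2 m1Q m2Q; rewrite !kron_exponentE => E.
have lt_digits m : m \in msupp Q -> (\sum_(i < k) m i * B ^ i < B ^ k)%N.
  by move=> mQ; apply: sum_digits_lt => i; apply: msupp_exponent_lt.
have := congr1 (modn^~ (B ^ k)%N) E.
rewrite !(addnC (\sum_(i < k) _)) !modnMDl !modn_small ?lt_digits // => E'.
by apply/mnmP; apply: sum_digits_inj E' => i; apply: msupp_exponent_lt.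
Qed.

Let coef_kron m : m \in msupp Q -> kq`_(e m) = Q@_m.
Proof.
move=> mQ; rewrite /kq coef_sum (bigD1_seq m) ?msupp_uniq //=.
rewrite coefZ coefXn eqxx mulr1.
rewrite big_seq_cond big1 ?addr0 // => m' /andP[m'Q m'm].
by rewrite coefZ coefXn eq_sym (inj_in_eq kron_exponent_inj) // (negbTE m'm) mulr0.
Qed.

Let meval_kron (t : nat) : Q.@[fun i => (t ^ c i)%:R] = kq.[t%:R].
Proof.
rewrite mevalE /kq horner_sum; apply: eq_bigr => m _.
rewrite hornerZ hornerXn; congr (_ * _).
under eq_bigr do rewrite natrX -exprM.
by rewrite prodrXr /e; congr (_ ^+ _); apply: eq_bigr => i _; rewrite mulnC.
Qed.

Let kron_exponent_lt L m : m \in msupp Q -> (m j < L)%N -> (e m < L * c j)%N.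
Proof.
move=> mQ mjL; rewrite kron_exponentE (@leq_trans (B ^ k + m j * B ^ k)) //.
  by rewrite ltn_add2r; apply: sum_digits_lt => i; apply: msupp_exponent_lt.
rewrite -mulSn /c eqxx mul1n (@leq_trans (L * B ^ k)) //.
  by rewrite leq_mul2r mjL orbT.
by rewrite leq_mul2l leq_addl orbT.
Qed.

Lemma mcoeff_eq0_of_int_multiple_meval (L : nat) (K : int) :
  K != 0 ->
  (forall a : 'I_k -> int,
     int_multiple (a j ^+ L) (K%:~R * Q.@[fun i => (a i)%:~R])) ->
  forall m : 'X_{1..k}, (m j < L)%N -> Q@_m = 0.
Proof.
move=> K0 HQ m mjL; apply/eqP; rewrite -[_ == 0]negbK -mcoeff_msupp.
apply/negP => mQ.
have [q [u u0 kqE]] := rat_poly_scale kq.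
have u0' : (u%:~R : rat) != 0 by rewrite intr_eq0.
have /eqP : (K *: q)`_(e m) = 0.
  apply: coef_eq0_of_dvd_horner (kron_exponent_lt mQ mjL) => t t0.
  have [z Hz] := HQ (fun i => (t ^ c i)%N%:Z).
  move: Hz; rewrite meval_kron kqE hornerZ (_ : t%:R = (t%:Z)%:~R) //.
  rewrite horner_map /= => Hz.
  suff -> : (K *: q).[t%:Z] = u * z * t%:Z ^+ (L * c j) by apply: dvdz_mull.
  apply: (@intr_inj rat); rewrite hornerZ rmorphM /=.
  have -> : (K%:~R * (q.[t%:Z])%:~R : rat) =
            u%:~R * (K%:~R * (u%:~R^-1 * (q.[t%:Z])%:~R)) by field.
  have natz (x : nat) : (x%:Z)%:~R = x%:R :> rat by [].
  by rewrite Hz !rmorphM !rmorphXn /= !natz -exprM (mulnC (c j)) mulrCA mulrC.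
rewrite coefZ mulf_eq0 (negbTE K0) /= => /eqP qe0.
have := coef_kron mQ; rewrite kqE coefZ coef_map /= qe0 mulr0 => Qm0.
by move: mQ; rewrite mcoeff_msupp -Qm0 eqxx.
Qed.

End KroneckerSubstitution.

Definition polynomially_bounded (R : numDomainType) (f : nat -> R) (M : nat) : Prop :=
  exists C : R, forall r, (0 < r)%N -> `|f r| <= C * r%:R ^+ M.

Section PolynomiallyBounded.
Variable R : numDomainType.
Implicit Types f g : nat -> R.

Lemma polynomially_bounded_sum (I : Type) (s : seq I) (P : pred I)
    (F : I -> nat -> R) M :
  (forall i, P i -> polynomially_bounded (F i) M) ->
  polynomially_bounded (fun r => \sum_(i <- s | P i) F i r) M.
Proof.
move=> HF; elim: s => [|i s [C HC]].
  by exists 0 => r _; rewrite big_nil normr0 mul0r.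
case: (boolP (P i)) => Pi.
  have [Ci HCi] := HF i Pi; exists (Ci + C) => r r0; rewrite big_cons Pi mulrDl.
  by apply: le_trans (ler_normD _ _) _; rewrite lerD ?HCi ?HC.
by exists C => r r0; rewrite big_cons (negbTE Pi) HC.
Qed.

Lemma polynomially_boundedM f g M1 M2 :
  polynomially_bounded f M1 -> polynomially_bounded g M2 ->
  polynomially_bounded (fun r => f r * g r) (M1 + M2).
Proof.
move=> [C1 H1] [C2 H2]; exists (C1 * C2) => r r0.
by rewrite normrM exprD mulrACA ler_pM ?H1 ?H2.
Qed.

Lemma polynomially_bounded_cst (c : R) : polynomially_bounded (fun=> c) 0.
Proof. by exists `|c| => r _; rewrite expr0 mulr1. Qed.

End PolynomiallyBounded.

Lemma lead_coef_horner_le (R : realDomainType) (P : {poly R}) (x : R) : 1 <= x ->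
  `|lead_coef P| * x ^+ (size P).-1 <=
  `|P.[x]| + (\sum_(i < (size P).-1) `|P`_i|) * x ^+ (size P).-2.
Proof.
move=> x1; have x0 : 0 <= x by apply: le_trans x1.
case sP: (size P) => [|d] /=.
  by rewrite lead_coefE sP nth_default ?sP // normr0 mul0r big_ord0 mul0r addr0.
set low := \sum_(i < d) P`_i * x ^+ i.
have Plow : P.[x] = low + lead_coef P * x ^+ d.
  by rewrite horner_coef sP big_ord_recr lead_coefE sP.
have low_le : `|low| <= (\sum_(i < d) `|P`_i|) * x ^+ d.-1.
  rewrite mulr_suml; apply: le_trans (ler_norm_sum _ _ _) _; apply: ler_sum => i _.
  rewrite normrM normrX (ger0_norm x0) ler_wpM2l // ler_weXn2l //.
  by have := ltn_ord i; lia.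
rewrite -(ger0_norm (exprn_ge0 d x0)) -normrM (_ : _ * _ = P.[x] - low); last first.
  by rewrite Plow addrC addKr.
by apply: le_trans (ler_normB _ _) _; rewrite lerD2l.
Qed.

Lemma size_poly_le_of_bounded (R : archiRealFieldType) (P : {poly R}) (f : nat -> R)
    (N M : nat) :
  (forall r, (N <= r)%N -> P.[r%:R] = f r) -> polynomially_bounded f M ->
  (size P <= M.+1)%N.
Proof.
move=> Pf [C HC]; rewrite leqNgt; apply/negP => sP.
set d := (size P).-1; set S := \sum_(i < d) `|P`_i|.
have lc0 : 0 < `|lead_coef P|.
  by rewrite normr_gt0 lead_coef_eq0 -size_poly_eq0 -lt0n (leq_trans _ sP).
have S0 : 0 <= S by rewrite sumr_ge0.
pose r := (N + Num.bound ((S + `|C|) / `|lead_coef P|)).+1.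
have x1 : 1 <= r%:R :> R by rewrite ler1n.
have x0 : 0 < r%:R :> R by apply: lt_le_trans x1.
have big_r : S + `|C| < `|lead_coef P| * r%:R.
  rewrite mulrC -ltr_pdivrMr //; apply: lt_le_trans (archi_boundP _) _.
    by rewrite divr_ge0 // addr_ge0.
  by rewrite ler_nat /r ltnW // ltnS leq_addl.
have CM : `|P.[r%:R]| <= `|C| * r%:R ^+ d.-1.
  rewrite Pf ?(leq_trans (leq_addr _ _) (leqnSn _)) //.
  apply: le_trans (HC r isT) _; apply: le_trans (ler_wpM2r _ (ler_norm _)) _.
    exact: exprn_ge0 (ltW x0).
  by rewrite ler_wpM2l // ler_weXn2l // /d; lia.
have := lead_coef_horner_le P x1; rewrite -/d -/S.
have -> : r%:R ^+ d = r%:R * r%:R ^+ d.-1 :> R.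
  by rewrite -exprS /d; congr (_ ^+ _); lia.
move=> H; have : `|lead_coef P| * r%:R * r%:R ^+ d.-1 <= (S + `|C|) * r%:R ^+ d.-1.
  by rewrite -mulrA mulrDl; apply: le_trans H _; rewrite addrC lerD2l.
by rewrite ler_pM2r ?exprn_gt0 // leNgt big_r.
Qed.

Definition interp_denom (N : nat) : int :=
  \prod_(i < N.+1) \prod_(j < N.+1 | (i < j)%N) (j%:Z - i%:Z).

Lemma interp_denom_neq0 N : interp_denom N != 0.
Proof.
apply/prodf_neq0 => i _; apply/prodf_neq0 => j ij.
by rewrite subr_eq0 eqz_nat neq_ltn ij orbT.
Qed.

Lemma int_multiple_coef_interp (N R : nat) (T : {poly rat}) (A : int) :
  (size T <= N.+1)%N ->
  (forall l, (l <= N)%N -> int_multiple A T.[(R + l)%:R]) ->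
  forall i, int_multiple A ((interp_denom N)%:~R * T`_i).
Proof.
move=> sT HT i; have [iN|iN] := ltnP i N.+1; last first.
  by rewrite nth_default ?mulr0; [exists 0; rewrite mulr0 | exact: leq_trans iN].
pose V := map_mx (intr : int -> rat) (Vandermonde N.+1 (\row_(l < N.+1) (R + l)%:Z)).
pose cT : 'rV[rat]_(N.+1) := \row_i T`_i.
have cTV l : (cT *m V) 0 l = T.[(R + l)%:R].
  rewrite mxE (horner_coef_wide _ sT); apply: eq_bigr => k _.
  by rewrite !mxE rmorphXn.
have detV : \det V = (interp_denom N)%:~R.
  rewrite det_map_mx det_Vandermonde; congr intr.
  apply: eq_bigr => k _; apply: eq_bigr => l _.
  by rewrite !mxE !PoszD opprD addrACA subrr add0r.
have Cramer : cT *m V *m \adj V = \det V *: cT.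
  by rewrite -mulmxA mul_mx_adj mul_mx_scalar.
move: (congr1 (fun X : 'rV[rat]_(N.+1) => X 0 (Ordinal iN)) Cramer) => /=.
rewrite [in RHS]mxE [in RHS]mxE detV => <-.
rewrite mxE; apply: int_multiple_sum => l _.
rewrite cTV /V -map_mx_adj mxE mulrC; apply: int_multipleMl; first exact: intr_int.
by apply: HT; rewrite -ltnS.
Qed.

Lemma int_multiple_rconst (f : nat -> rat) (c : rat) (A : int) (F e M : nat) :
  polynomially_bounded f M ->
  (forall r, (0 < r)%N -> int_multiple A (F%:R * r%:R ^+ e * f r)) ->
  rconst f c -> int_multiple A ((interp_denom (M + e) * F%:Z)%:~R * c).
Proof.
move=> fM fA [P [R [Pf ->]]].
have sP : (size P <= M.+1)%N by apply: size_poly_le_of_bounded fM => r /Pf.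
pose T := F%:R *: P * 'X^e.
have sT : (size T <= (M + e).+1)%N.
  rewrite (leq_trans (size_polyMleq _ _)) // size_polyXn addnS /= -addSn leq_add2r.
  exact: leq_trans (size_scale_leq _ _) sP.
have TA l : (l <= M + e)%N -> int_multiple A T.[(R.+1 + l)%:R].
  move=> _; rewrite /T hornerM hornerZ hornerXn -Pf; first by rewrite mulrAC; apply: fA.
  by rewrite (leq_trans (leqnSn R)) ?leq_addr.
have := int_multiple_coef_interp sT TA e.
by rewrite /T coefMXn ltnn subnn coefZ rmorphM /= mulrA; apply.
Qed.

Lemma leg_coef_scaled (a : int) (k : nat) :
  (2 ^ k * k`!)%:R * leg_coef a k = (a ^+ (2 * k))%:~R.
Proof.
have f0 : k`!%:R != 0 :> rat by rewrite pnatr_eq0 -lt0n fact_gt0.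
have t0 : (2 : rat) ^+ k != 0 by rewrite expf_neq0.
by rewrite /leg_coef rmorphXn /= exprM natrM natrX expr_div_n; field; rewrite f0 t0.
Qed.

Definition edge_coef_denom (s : nat) : nat := (2 ^ s.+1 * s.+1`!)%N.

Lemma edge_coef_scaled_int (s p q w1 w2 : nat) : (p + q <= s)%N ->
  (edge_coef_denom s)%:R * edge_coef (w1%:R * w2%:R / 2) p q \is a Num.int.
Proof.
rewrite /edge_coef /edge_coef_denom; set t := (p + q)%N => ts.
rewrite (fact_split (_ : t.+1 <= s.+1)%N) //.
rewrite (_ : 2 ^ s.+1 = 2 ^ (s - t) * 2 ^ t.+1)%N; last by rewrite -expnD; congr expn; lia.
set Pq := \prod_(_ <= _ < _) _.
have : (0 < t.+1`!)%N := fact_gt0 _; move: (t.+1`!) => T T0.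
have f0 : T%:R != 0 :> rat by rewrite pnatr_eq0 -lt0n.
have t0 : (2 : rat) ^+ t.+1 != 0 by rewrite expf_neq0.
have -> : (2 ^ (s - t) * 2 ^ t.+1 * (T * Pq))%:R *
            ((-1) ^+ t * (w1%:R * w2%:R / 2) ^+ t.+1 / T%:R * 'C(t, p)%:R) =
          (-1) ^+ t * (w1 * w2)%:R ^+ t.+1 * (2 ^ (s - t) * Pq * 'C(t, p))%:R :> rat.
  by rewrite !natrM !natrX expr_div_n; field; rewrite f0 t0.
by rewrite !rpredM ?rpredX ?rpredN ?rpred1 ?natr_int.
Qed.

Lemma edge_coef_bound (s p q r : nat) (w1 w2 : 'I_r) : (p + q <= s)%N ->
  `|edge_coef ((w1 : nat)%:R * (w2 : nat)%:R / 2) p q| <= s`!%:R * r%:R ^+ (2 * s + 2).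
Proof.
rewrite /edge_coef; set t := (p + q)%N => ts; set c := _ / 2.
have r1 : 1 <= r%:R :> rat by rewrite ler1n (leq_ltn_trans (leq0n _) (ltn_ord w1)).
have c0 : 0 <= c by rewrite divr_ge0 ?mulr_ge0.
have c_le : c <= r%:R ^+ 2.
  have w_le (w : 'I_r) : (w : nat)%:R <= r%:R :> rat by rewrite ler_nat ltnW.
  rewrite ler_pdivrMr // expr2 (le_trans (ler_pM _ _ (w_le w1) (w_le w2))) //.
  by rewrite ler_peMr ?mulr_ge0 ?(le_trans ler01 r1) // ler1n.
have bin_le : ('C(t, p)%:R : rat) <= s`!%:R.
  rewrite ler_nat (leq_trans _ (leq_fact ts)) // -(bin_fact (leq_addr q p)).
  by rewrite leq_pmulr // muln_gt0 !fact_gt0.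
rewrite !normrM normrX normrN1 expr1n mul1r normfV !normr_nat ger0_norm ?exprn_ge0 //.
rewrite mulrC ler_pM ?mulr_ge0 ?invr_ge0 ?exprn_ge0 //.
rewrite -[X in _ <= X]mulr1 ler_pM ?exprn_ge0 ?invr_ge0 //.
  rewrite (le_trans (lerXn2r _ _ _ c_le)) ?nnegrE ?exprn_ge0 // -exprM.
  by rewrite ler_weXn2l // addn2 mulnS add2n ltnS ltnS leq_mul2l ts orbT.
by rewrite invf_le1 ?ltr0n ?fact_gt0 // ler1n fact_gt0.
Qed.

Section GraphTerms.
Variables (g n V H : nat) (G : CG g n V H).

Lemma nedges_le : (nedges G <= H)%N.
Proof.
rewrite /nedges; apply: leq_trans (leq_div _ _) _.
by apply: leq_trans (max_card _) _; rewrite card_ord.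
Qed.

Lemma expr_h1_int (r e : nat) : (0 < r)%N -> (H < e)%N ->
  (r%:R : rat) ^+ e * r%:R ^ (- h1 G) \is a Num.int.
Proof.
move=> r0 He; have r0' : r%:R != 0 :> rat by rewrite pnatr_eq0 -lt0n.
have h1E : e%:Z - h1 G = (e + V - nedges G - 1)%N%:Z.
  by rewrite /h1; have := nedges_le; lia.
by rewrite (_ : r%:R ^+ e = r%:R ^ e%:Z) // -expfzDr // h1E; apply: rpredX; apply: natr_int.
Qed.

Let is_edge_rep (h : 'I_H) := (io G h != h) && (h < io G h)%N.

Lemma edge_part_scaled_int r (w : {ffun 'I_H -> 'I_r}) (y : 'I_H -> nat) (S e : nat) :
  (forall h, y h <= S)%N -> (H <= e)%N ->
  (edge_coef_denom (2 * S))%:R ^+ e *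
    \prod_(h | is_edge_rep h)
      edge_coef ((w h)%:R * (w (io G h))%:R / 2) (y h) (y (io G h))
  \is a Num.int.
Proof.
move=> yS He; have edges_e : (#|is_edge_rep| <= e)%N.
  by apply: leq_trans (max_card _) _; rewrite card_ord.
rewrite -(subnK edges_e) exprD -mulrA rpredM ?rpredX ?natr_int //.
rewrite -prodr_const -big_split rpred_prod // => h _.
by apply: edge_coef_scaled_int; rewrite mul2n -addnn leq_add.
Qed.

Lemma gamma_coef_int_multiple r (a : 'I_n -> int) (w : {ffun 'I_H -> 'I_r})
    (y : 'I_H -> nat) (S e : nat) (i0 : 'I_n) :
  (forall h, y h <= S)%N -> (H <= e)%N ->
  int_multiple (a i0 ^+ (2 * y (leg G i0)))
    (((edge_coef_denom (2 * S)) ^ e *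
      \prod_(i < n) (2 ^ y (leg G i) * (y (leg G i))`!))%:R * gamma_coef a G w y).
Proof.
move=> yS He; rewrite /gamma_coef natrM natrX natr_prod.
rewrite [_ * (\prod_h _)]mulrC mulrACA mulrC.
apply: int_multipleMl; first exact: edge_part_scaled_int.
rewrite -big_split /=; under eq_bigr do rewrite leg_coef_scaled.
rewrite (bigD1 i0) //= -rmorph_prod.
by exists (\prod_(i < n | i != i0) a i ^+ (2 * y (leg G i))).
Qed.

Lemma gamma_coef_bound r (a : 'I_n -> int) (w : {ffun 'I_H -> 'I_r})
    (y : 'I_H -> nat) (S e : nat) :
  (0 < r)%N -> (forall h, y h <= S)%N -> (H <= e)%N ->
  `|gamma_coef a G w y| <=
    `|\prod_(i < n) leg_coef (a i) (y (leg G i))| *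
    ((2 * S)`!%:R * r%:R ^+ (4 * S + 2)) ^+ e.
Proof.
move=> r0 yS He; rewrite /gamma_coef normrM ler_wpM2l // normr_prod.
set B : rat := (2 * S)`!%:R * r%:R ^+ (4 * S + 2).
have B1 : 1 <= B by rewrite -[1]mulr1 ler_pM // ?ler1n ?fact_gt0 // exprn_ege1 // ler1n.
apply: le_trans (_ : _ <= \prod_(h | is_edge_rep h) B) _.
  apply: ler_prod => h _; rewrite normr_ge0 /= /B.
  rewrite (_ : (4 * S = 2 * (2 * S))%N); last by rewrite mulnA.
  by apply: edge_coef_bound; rewrite mul2n -addnn leq_add.
rewrite prodr_const ler_weXn2l //; apply: leq_trans (max_card _) _.
by rewrite card_ord.
Qed.

Lemma weighted_gamma_sum_bounded (a : 'I_n -> int) (S e : nat)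
    (Pw : forall r, pred {ffun 'I_H -> 'I_r}) (Py : pred {ffun 'I_H -> 'I_S.+1}) :
  (H <= e)%N ->
  polynomially_bounded (fun r => \sum_(w : {ffun 'I_H -> 'I_r} | Pw r w)
     \sum_(y | Py y) gamma_coef a G w (fun h => y h : nat)) (e + (4 * S + 2) * e).
Proof.
move=> He; set C := (\sum_(y : {ffun 'I_H -> 'I_S.+1})
  `|\prod_(i < n) leg_coef (a i) (y (leg G i))|) * (2 * S)`!%:R ^+ e.
have C0 : 0 <= C by rewrite mulr_ge0 ?sumr_ge0 ?exprn_ge0.
exists C => r r0; have r1 : 1 <= r%:R :> rat by rewrite ler1n.
have Hw (w : {ffun 'I_H -> 'I_r}) :
    `|\sum_(y | Py y) gamma_coef a G w (fun h => y h : nat)| <=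
    C * r%:R ^+ ((4 * S + 2) * e).
  apply: le_trans (ler_norm_sum _ _ _) _.
  rewrite /C -mulrA mulr_suml big_mkcond /=; apply: ler_sum => y _.
  case: ifP => _; last by rewrite mulr_ge0 ?mulr_ge0 ?exprn_ge0.
  have yS h : (y h <= S)%N by rewrite -ltnS.
  apply: le_trans (gamma_coef_bound _ _ r0 yS He) _.
  by rewrite exprMn -exprM mulnC.
apply: le_trans (ler_norm_sum _ _ _) _.
apply: le_trans (_ : _ <= \sum_(w : {ffun 'I_H -> 'I_r}) C * r%:R ^+ ((4 * S + 2) * e)) _.
  rewrite big_mkcond; apply: ler_sum => w _.
  by case: ifP => // _; rewrite mulr_ge0 ?exprn_ge0.
rewrite sumr_const card_ffun !card_ord -mulrnAr ler_wpM2l // -mulr_natl natrX exprD.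
by rewrite ler_wpM2r ?exprn_ge0 ?ler_weXn2l // (le_trans ler01 r1).
Qed.

Lemma expr_h1_bounded (e : nat) : (V < e)%N ->
  polynomially_bounded (fun r => (r%:R : rat) ^ (- h1 G)) e.
Proof.
move=> Ve; exists 1 => r r0; rewrite mul1r.
have r1 : 1 <= r%:R :> rat by rewrite ler1n.
case E: (- h1 G) => [k|k].
  rewrite ger0_norm ?exprn_ge0 ?(le_trans ler01 r1) // ler_weXn2l //.
  by move: E; rewrite /h1; lia.
rewrite normfV ger0_norm ?exprn_ge0 ?(le_trans ler01 r1) //.
rewrite (le_trans _ (exprn_ege1 _ r1)) // invf_le1 ?exprn_ege1 //.
by rewrite exprn_gt0 // (lt_le_trans ltr01 r1).
Qed.

End GraphTerms.

Lemma deco_iso_leg g n V H V0 H0 (G : CG g n V H) (y : 'I_H -> nat)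
    (G0 : CG g n V0 H0) (y0 : 'I_H0 -> nat) i :
  deco_iso G y G0 y0 -> y (leg G i) = y0 (leg G0 i).
Proof.
case/and3P => _ _ /existsP[fV /existsP[fH /and4P[_ _ iso fH_y]]].
case/and4P: iso => _ _ _ /forallP fH_leg; move/forallP: fH_y => fH_y.
by rewrite (eqP (fH_leg i)) (eqP (fH_y _)).
Qed.

Lemma natr_mul_inv_int (F m : nat) :
  (m %| F)%N -> (F%:R : rat) * m%:R^-1 \is a Num.int.
Proof.
case/dvdnP => k ->; case: (posnP m) => [->|m0]; first by rewrite invr0 mulr0 rpred0.
by rewrite natrM mulfK ?natr_int // pnatr_eq0 -lt0n.
Qed.

Lemma class_aut_denom (g n gb : nat) : exists2 F : nat, (0 < F)%N &
  forall (V H : 'I_gb) (G : CG g n V H),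
    (F%:R : rat) * ((n_class G)%:R * (n_aut G)%:R)^-1 \is a Num.int.
Proof.
pose m V H (G : CG g n V H) := (n_class G * n_aut G)%N.
(* maxn 1 guards against n_class G = 0 (non-stable G), keeping the product positive. *)
exists (\prod_(V < gb) \prod_(H < gb) \prod_(G : CG g n V H) maxn 1 (m V H G))%N.
  by do 3!apply: prodn_gt0 => ?; rewrite leq_max.
move=> V H G; rewrite -natrM; case: (posnP (n_class G * n_aut G)%N) => [->|m0].
  by rewrite invr0 mulr0 rpred0.
have dvdn_prod (I : finType) (f : I -> nat) i : (f i %| \prod_j f j)%N.
  by rewrite (bigD1 i) //= dvdn_mulr.
apply: natr_mul_inv_int; rewrite -(maxn_idPr m0).
do 2!apply: dvdn_trans (dvdn_prod _ _ _).
exact: (dvdn_prod _ (fun G => maxn 1 (m V H G))).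
Qed.

Lemma Dtilde_coef_int_multiple g n V0 H0 (G0 : CG g n V0 H0) (y0 : 'I_H0 -> nat)
    (i0 : 'I_n) :
  exists F : nat, (0 < F)%N /\ forall (a : 'I_n -> int) (r : nat), (0 < r)%N ->
    int_multiple (a i0 ^+ (2 * y0 (leg G0 i0)))
                 (F%:R * r%:R ^+ gbound g n * Dtilde_coef G0 y0 r a).
Proof.
set gb := gbound g n; set S := (\sum_(h < H0) y0 h)%N.
have [F1 F1_gt0 F1_int] := class_aut_denom g n gb.
set FL := (\prod_(i < n) (2 ^ y0 (leg G0 i) * (y0 (leg G0 i))`!))%N.
set E := (edge_coef_denom (2 * S) ^ gb * FL)%N.
exists (F1 * E)%N; split.
  rewrite muln_gt0 F1_gt0 muln_gt0 expn_gt0 muln_gt0 expn_gt0 fact_gt0 /=.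
  by apply: prodn_gt0 => i; rewrite muln_gt0 expn_gt0 fact_gt0.
move=> a r r0; rewrite /Dtilde_coef -/gb mulr_sumr; apply: int_multiple_sum => V _.
rewrite mulr_sumr; apply: int_multiple_sum => H _.
rewrite mulr_sumr; apply: int_multiple_sum => G _.
set c := ((n_class G)%:R * _)^-1; set rho := r%:R ^ _; set X := \sum_(w | _) _.
have -> : (F1 * E)%:R * r%:R ^+ gb * (c * rho * X) =
          (F1%:R * c) * ((r%:R ^+ gb * rho) * (E%:R * X)) by rewrite natrM; ring.
apply: int_multipleMl; first exact: F1_int.
apply: int_multipleMl; first exact: expr_h1_int.
rewrite mulr_sumr; apply: int_multiple_sum => w _.
rewrite mulr_sumr; apply: int_multiple_sum => y dy.
have FLy : FL = \prod_(i < n) (2 ^ y (leg G i) * (y (leg G i))`!)%N.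
  by apply: eq_bigr => i _; rewrite (deco_iso_leg i dy).
have := @gamma_coef_int_multiple _ _ _ _ G _ a w (fun h => y h) S gb i0.
rewrite (deco_iso_leg i0 dy) -FLy; apply=> [h|]; first by rewrite -ltnS.
exact: ltnW.
Qed.

Lemma Dtilde_coef_bounded g n V0 H0 (G0 : CG g n V0 H0) (y0 : 'I_H0 -> nat) :
  exists M, forall a, polynomially_bounded (fun r => Dtilde_coef G0 y0 r a) M.
Proof.
set gb := gbound g n; set S := (\sum_(h < H0) y0 h)%N.
exists (0 + gb + (gb + (4 * S + 2) * gb))%N => a; rewrite /Dtilde_coef -/gb.
apply: polynomially_bounded_sum => V _; apply: polynomially_bounded_sum => H _.
apply: polynomially_bounded_sum => G _.
apply: polynomially_boundedM; first apply: polynomially_boundedM.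
- exact: polynomially_bounded_cst.
- exact: expr_h1_bounded.
- exact: weighted_gamma_sum_bounded (ltnW (ltn_ord H)).
Qed.

Lemma extend_a_shift1 n (a' : 'I_n.-1 -> int) (j : 'I_n.-1) :
  extend_a a' (shift1 j) = a' j.
Proof.
rewrite /extend_a /shift1 /=.
by case: insubP => [j' _ /val_inj ->|]; rewrite ?ltn_ord.
Qed.

Theorem lemma2p4 (g n d : nat) (Hgn : (2 < 2 * g + n)%N)
  (b : 'X_{1..n.-1})
  (V0 H0 : nat) (G0 : CG g n V0 H0) (HG0 : is_stable_graph G0)
  (y0 : 'I_H0 -> nat) (Hy0 : valid_deco G0 y0)
  (Hdeg : (nedges G0 + \sum_(h < H0) y0 h)%N = d)
  (Q : {mpoly rat[n.-1]})
  (HQ : forall a' : 'I_n.-1 -> int,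
      rconst (fun r => Dtilde_coef G0 y0 r (extend_a a'))
             (Q.@[fun j => (a' j)%:~R]))
  (Hnz : Q@_b != 0) :
  forall j : 'I_n.-1, ((y0 (leg G0 (shift1 j)))%:R <= (b j)%:R / 2 :> rat).
Proof.
move=> j; set k := y0 (leg G0 (shift1 j)).
suff : (2 * k <= b j)%N by move=> h; rewrite ler_pdivlMr // -natrM ler_nat mulnC.
have [F [F0 HF]] := Dtilde_coef_int_multiple G0 y0 (shift1 j).
have [M HM] := Dtilde_coef_bounded G0 y0.
rewrite leqNgt; apply: contra Hnz => bj_lt; apply/eqP.
set K := interp_denom (M + gbound g n) * F%:Z.
apply: (@mcoeff_eq0_of_int_multiple_meval _ _ _ _ K) bj_lt.
  by rewrite mulf_neq0 ?interp_denom_neq0 // eqz_nat -lt0n.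
move=> a'; rewrite -(extend_a_shift1 a' j).
exact: int_multiple_rconst (HM _) (HF _) (HQ a').
Qed.
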